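(* For $n \ge 3$, if $n \pmod 6 \notin \{2,4\}$, then the path $P_n$ is not $\gamma_{\rm tg}$-critical.
   Context: Total domination game: Dominator and Staller alternately choose vertices, each chosen vertex must be adjacent to some vertex not yet totally dominated; the game ends when no legal move exists; Dominator minimizes, Staller maximizes the number of moves; $\gamma_{\rm tg}(G)$ is the number of moves in the Dominator-start game under optimal play. $G|v$ is $G$ with $v$ declared already totally dominated, with $\gamma_{\rm tg}(G|v)$ defined analogously. $G$ is $\gamma_{\rm tg}$-critical if $\gamma_{\rm tg}(G|v)<\gamma_{\rm tg}(G)$ for all vertices $v$. *)

From mathcomp Require Import all_boot.
Set Implicit Arguments. Unset Strict Implicit. Unset Printing Implicit Defensive.

(* A simple graph is a symmetric irreflexive relation [e] on a finite type [T]. *)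
Section TotalDominationGame.
Variables (T : finType) (e : rel T).

Definition nbhd (u : T) : {set T} := [set w | e u w].

(* D = set of vertices already totally dominated.  A vertex u is a legal
   move iff it is adjacent to some vertex not yet totally dominated. *)
Definition legal (D : {set T}) (u : T) : bool := [exists w, e u w && (w \notin D)].

(* Value (number of remaining moves under optimal play) of the game from
   position D, with Dominator to move iff [dom]; [k] is fuel (every legal
   move strictly enlarges D, so fuel #|T|.+1 is never exhausted). *)
Fixpoint game_value (k : nat) (D : {set T}) (dom : bool) : nat :=
  match k with
  | 0 => 0
  | k'.+1 =>
    let vals := [seq (game_value k' (D :|: nbhd u) (~~ dom)).+1
                | u <- enum T & legal D u] in
    if vals is v0 :: _ then
      (if dom then foldr minn v0 vals else foldr maxn v0 vals)
    else 0
  end.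

Definition gamma_tg : nat := game_value #|T|.+1 set0 true.

Definition gamma_tg_at (v : T) : nat := game_value #|T|.+1 [set v] true.

Definition gamma_tg_critical : Prop := forall v : T, gamma_tg_at v < gamma_tg.

End TotalDominationGame.

Definition path_rel (n : nat) : rel 'I_n :=
  fun i j => (i.+1 == j :> nat) || (j.+1 == i :> nat).
Arguments path_rel n : clear implicits.

(* In P_n a move at u dominates only u - 1 and u + 1, so a position splits into
   the even and the odd vertices, each a sequence of maximal runs of
   undominated vertices.  A run of length a has two flags telling whether its
   first (last) vertex can be dominated alone.  Let sigma be the sum over all
   runs of 2 * floor((2a + 1) / 3), plus 1 for each run with a = 2 (mod 3) and
   an open end.  Every move decreases sigma by 1, 2 or 3; if some run has the
   extra 1, moves decreasing sigma by 3 and by 1 exist, and otherwise sigma is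
   even and some move decreases it by 2.  Hence the game value is
   floor(sigma / 2) with Dominator to move and ceil(sigma / 2) with Staller to
   move.  Comparing sigma(P_n) with sigma(P_n | v) for v = 2, 3 or 0 according
   to n mod 6 gives gamma_tg(P_n | v) >= gamma_tg(P_n). *)

From mathcomp Require Import all_boot zify.
Set Implicit Arguments. Unset Strict Implicit. Unset Printing Implicit Defensive.

Lemma foldr_minn_eq (s : seq nat) x0 m :
  x0 \in s -> m \in s -> {in s, forall x, m <= x} -> foldr minn x0 s = m.
Proof.
move=> x0s ms m_min; apply/eqP; rewrite eqn_leq.
have -> : foldr minn x0 s <= m.
  elim: s ms {x0s m_min} => [|y s IHs] //=; rewrite inE geq_min.
  by case/predU1P=> [->|/IHs->]; rewrite ?leqnn ?orbT.
have : foldr minn x0 s \in x0 :: s.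
  elim: s {x0s ms m_min} => [|y s IHs] /=; first by rewrite inE.
  rewrite /minn !inE in IHs *; case: ifP; rewrite ?eqxx ?orbT //.
  by case/orP: IHs => ->; rewrite ?orbT.
by rewrite inE => /predU1P[->|/m_min//]; apply: m_min.
Qed.

Lemma foldr_maxn_eq (s : seq nat) x0 m :
  x0 \in s -> m \in s -> {in s, forall x, x <= m} -> foldr maxn x0 s = m.
Proof.
move=> x0s ms m_max; apply/eqP; rewrite eqn_leq andbC.
have -> : m <= foldr maxn x0 s.
  elim: s ms {x0s m_max} => [|y s IHs] //=; rewrite inE leq_max.
  by case/predU1P=> [->|/IHs->]; rewrite ?leqnn ?orbT.
have : foldr maxn x0 s \in x0 :: s.
  elim: s {x0s ms m_max} => [|y s IHs] /=; first by rewrite inE.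
  rewrite /maxn !inE in IHs *; case: ifP; rewrite ?eqxx ?orbT //.
  by case/orP: IHs => ->; rewrite ?orbT.
by rewrite inE => /predU1P[->|/m_max//]; apply: m_max.
Qed.

Section GameValue.
Variables (T : finType) (e : rel T).

Lemma legal_undominated_card D u :
  legal e D u -> #|~: (D :|: nbhd e u)| < #|~: D|.
Proof.
case/existsP=> w /andP[euw wD]; apply: proper_card; apply/properP.
split; first by rewrite setCS subsetUl.
by exists w; rewrite !inE ?negbK ?euw ?orbT.
Qed.

Variable f : {set T} -> bool -> nat.
Hypothesis f_terminal : forall D dom, (forall u, ~~ legal e D u) -> f D dom = 0.
Hypothesis f_move : forall D u, legal e D u ->
  f D true <= (f (D :|: nbhd e u) false).+1 /\
  (f (D :|: nbhd e u) true).+1 <= f D false.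
Hypothesis f_best : forall D, (exists u, legal e D u) ->
  (exists2 u, legal e D u & f D true = (f (D :|: nbhd e u) false).+1) /\
  (exists2 u, legal e D u & f D false = (f (D :|: nbhd e u) true).+1).

Lemma game_value_eq k D dom : #|~: D| < k -> game_value e k D dom = f D dom.
Proof.
elim: k D dom => [//|k IHk] D dom Dk /=.
set vals := [seq _ | u <- _].
have valsP x : reflect (exists2 u, legal e D u & x = (f (D :|: nbhd e u) (~~ dom)).+1)
                       (x \in vals).
  have IHu u : legal e D u ->
      game_value e k (D :|: nbhd e u) (~~ dom) = f (D :|: nbhd e u) (~~ dom).
    by move=> Du; apply: IHk; apply: leq_trans (legal_undominated_card Du) _.
  apply: (iffP mapP) => -[u].
    by rewrite mem_filter mem_enum andbT => Du ->; exists u; rewrite ?IHu.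
  by move=> Du ->; exists u; rewrite ?IHu // mem_filter mem_enum Du.
clearbody vals; case: vals valsP => [|x0 xs] valsP.
  rewrite f_terminal // => u; apply/negP => Du.
  suff : (f (D :|: nbhd e u) (~~ dom)).+1 \in [::] by [].
  by apply/valsP; exists u.
case/valsP: (mem_head x0 xs) => u0 D0 _.
have [[u1 Du1 fu1] [u2 Du2 fu2]] := f_best (ex_intro _ u0 D0).
case: dom valsP => valsP.
  apply: foldr_minn_eq; rewrite ?mem_head //; first by apply/valsP; exists u1.
  by move=> _ /valsP[u Du ->]; case: (f_move Du).
apply: foldr_maxn_eq; rewrite ?mem_head //; first by apply/valsP; exists u2.
by move=> _ /valsP[u Du ->]; case: (f_move Du).
Qed.

End GameValue.

Section HalvedPotential.
Variables (T : finType) (e : rel T) (sigma : {set T} -> nat).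
Hypothesis sigma_terminal : forall D, (forall u, ~~ legal e D u) -> sigma D = 0.
Hypothesis sigma_move : forall D u, legal e D u ->
  sigma (D :|: nbhd e u) < sigma D <= sigma (D :|: nbhd e u) + 3.
Hypothesis sigma_best : forall D, (exists u, legal e D u) ->
  (exists2 u, legal e D u & sigma D = sigma (D :|: nbhd e u) + 3) /\
  (exists2 u, legal e D u & sigma D = sigma (D :|: nbhd e u) + 1) \/
  ~~ odd (sigma D) /\ (exists2 u, legal e D u & sigma D = sigma (D :|: nbhd e u) + 2).

Lemma game_value_halved_potential D dom :
  game_value e #|T|.+1 D dom = (sigma D + ~~ dom) %/ 2.
Proof.
apply: (game_value_eq (f := fun D dom => (sigma D + ~~ dom) %/ 2)).
- by move=> {}D {}dom /sigma_terminal ->; case: dom.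
- by move=> {}D u /sigma_move; lia.
- move=> {}D /sigma_best[[[u1 Du1 s1] [u2 Du2 s2]] | [even_s [u Du s]]].
    split; [exists u1 => //; rewrite s1 | exists u2 => //; rewrite s2]; lia.
  by move: even_s; rewrite s => even_s; split; exists u => //; lia.
- by rewrite ltnS max_card.
Qed.

End HalvedPotential.

(* A run is a maximal block of undominated positions of a sequence: its length,
   and whether a move can dominate its first (resp. last) position alone. *)
Definition run := (nat * bool * bool)%type.

Definition mkrun k lf rf : seq run := if k is 0 then [::] else [:: (k, lf, rf)].

(* The runs of [nseq k false ++ c], the first one with left flag [lf]; [ro]
   tells whether a move can dominate the last position of [c] alone. *)
Fixpoint runs_from lf k (c : seq bool) ro : seq run :=
  if c is b :: c' then
    if b then mkrun k lf true ++ runs_from true 0 c' ro else runs_from lf k.+1 c' ro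
  else mkrun k lf ro.

Notation runs lo c ro := (runs_from lo 0 c ro).

Definition bonus (p : run) : bool :=
  let: (a, lf, rf) := p in (a %% 3 == 2) && (lf || rf).

Definition run_score (p : run) : nat := 2 * ((2 * p.1.1 + 1) %/ 3) + bonus p.

Definition score (s : seq run) : nat := sumn (map run_score s).

Lemma score_cat s t : score (s ++ t) = score s + score t.
Proof. by rewrite /score map_cat sumn_cat. Qed.

Lemma score_mkrun k lf rf : score (mkrun k lf rf) = run_score (k, lf, rf).
Proof. by case: k => [|k]; rewrite /score /= ?addn0. Qed.

Lemma odd_score s : odd (score s) -> has bonus s.
Proof.
elim: s => [//|p s IHs] /= odd_ps; case: (boolP (bonus p)) => //= plain_p.
by apply: IHs; move: odd_ps; rewrite /score /= -/(score s) /run_score; lia.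
Qed.

Lemma runs_from_nseq lf k a c ro :
  runs_from lf k (nseq a false ++ c) ro = runs_from lf (k + a) c ro.
Proof. by elim: a k => [|a IHa] k; rewrite ?addn0 //= IHa addSnnS. Qed.

Lemma runs_nseq lo a ro : runs lo (nseq a false) ro = mkrun a lo ro.
Proof. by rewrite -[nseq a false]cats0 runs_from_nseq. Qed.

Lemma runs_from_cat_true lf k X Y ro :
  runs_from lf k (X ++ true :: Y) ro = runs_from lf k X true ++ runs true Y ro.
Proof. by elim: X lf k => [|[] X IHX] lf k //=; rewrite IHX catA. Qed.

Lemma runs_cat3 lo X Z Y ro : last true X -> head true Y ->
  runs lo (X ++ Z ++ Y) ro =
  runs lo X true ++ runs ((X != [::]) || lo) Z ((Y != [::]) || ro) ++ runs true Y ro.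
Proof.
move=> lastX headY.
have runs_ZY lf : runs lf (Z ++ Y) ro =
                  runs lf Z ((Y != [::]) || ro) ++ runs true Y ro.
  case: Y headY => [|[] Y] //= _; first by rewrite !cats0.
  by rewrite runs_from_cat_true.
case/lastP: X lastX => [|X x] //=; rewrite last_rcons => -> /=.
rewrite -cats1 -catA /= !runs_from_cat_true runs_ZY /= cats0.
by case: X.
Qed.

(* A move at gap [h] of a run dominates its positions [h - 1] and [h] (those
   that exist); the gaps [0] and [a] are available only on open ends. *)
Definition in_run_move (p : run) h : bool :=
  let: (a, lf, rf) := p in [&& 0 < a, h <= a, lf || (0 < h) & rf || (h < a)].

Definition split_run (p : run) h : seq run :=
  let: (a, lf, rf) := p in mkrun h.-1 lf true ++ mkrun (a - h.+1) true rf.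

Definition movable_run (p : run) : bool :=
  let: (a, lf, rf) := p in (0 < a) && [|| lf, rf | 1 < a].

Lemma score_split_run a lf rf h : score (split_run (a, lf, rf) h) =
  run_score (h.-1, lf, true) + run_score (a - h.+1, true, rf).
Proof. by rewrite score_cat !score_mkrun. Qed.

Lemma run_score_split_run p h : in_run_move p h ->
  score (split_run p h) < run_score p <= score (split_run p h) + 3.
Proof.
case: p => -[a lf] rf; rewrite score_split_run /run_score /=.
by case/and4P=> a_gt0 h_le; case: lf rf => [] [] /=; lia.
Qed.

Lemma bonus_run_moves p : bonus p ->
  (exists2 h, in_run_move p h & run_score p = score (split_run p h) + 3) /\
  (exists2 h, in_run_move p h & run_score p = score (split_run p h) + 1).
Proof.
case: p => -[a lf] rf /andP[/eqP a_mod open_a].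
split; first by exists 1; rewrite ?score_split_run /run_score /=; lia.
by case: lf open_a => [_ | rf_open]; [exists 0 | exists a];
  rewrite ?score_split_run /run_score /=; lia.
Qed.

Lemma plain_run_move p : movable_run p -> ~~ bonus p ->
  exists2 h, in_run_move p h & run_score p = score (split_run p h) + 2.
Proof.
case: p => -[a lf] rf /andP[a_gt0 a_open] plain_a.
have [a1 | a_gt1] := leqP a 1.
  have -> : a = 1 by lia.
  by case: lf a_open {plain_a} => [_ | rf_open]; [exists 0 | exists 1];
    rewrite ?score_split_run /run_score /=; lia.
have [a_mod1 | a_mod] := eqVneq (a %% 3) 1.
  by exists 2; rewrite ?score_split_run /run_score /=; lia.
by exists 1; move: plain_a; rewrite ?score_split_run /run_score /=; lia.
Qed.

Lemma run_move_exists p : movable_run p -> exists h, in_run_move p h.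
Proof.
move=> movable_p; case: (boolP (bonus p)).
  by case/bonus_run_moves=> -[h move_h _] _; exists h.
by case/(plain_run_move movable_p)=> h move_h _; exists h.
Qed.

Fixpoint mark_gap (c : seq bool) g : seq bool :=
  if c is x :: c' then
    match g with
    | 0 => true :: c'
    | 1 => true :: mark_gap c' 0
    | g'.+2 => x :: mark_gap c' g'.+1
    end
  else [::].

Lemma size_mark_gap c g : size (mark_gap c g) = size c.
Proof. by elim: c g => [|x c IHc] [|[|g]] //=; rewrite IHc. Qed.

Lemma nth_mark_gap c g j : j < size c ->
  nth true (mark_gap c g) j = [|| nth true c j, j.+1 == g | j == g].
Proof.
by elim: c g j => [//|x c IHc] [|[|g]] [|j] //= j_lt; rewrite ?IHc ?orbT ?orbF.
Qed.

Lemma mark_gap_catl X W g : last true X ->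
  mark_gap (X ++ W) (size X + g) = X ++ mark_gap W g.
Proof.
elim: X g => [//|x [|y X] IHX] g /=; first by move=> ->; case: g.
by move=> /(IHX g) /= ->.
Qed.

Lemma mark_gap_nseq_cat a h Y : h <= a -> head true Y ->
  mark_gap (nseq a false ++ Y) h = mark_gap (nseq a false) h ++ Y.
Proof.
elim: a h => [|a IHa] [|[|h]] //=; first by case: Y => [|[] Y].
- by move=> _ /(IHa 0) ->.
- by move=> h_le /(IHa h.+1) ->.
Qed.

Lemma mark_gap_run X a Y h : last true X -> head true Y -> h <= a ->
  mark_gap (X ++ nseq a false ++ Y) (size X + h) = X ++ mark_gap (nseq a false) h ++ Y.
Proof. by move=> lastX headY h_le; rewrite mark_gap_catl // mark_gap_nseq_cat. Qed.

Lemma runs_from_mark_nseq lf k a h rf : 0 < a -> h <= a ->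
  runs_from lf k (mark_gap (nseq a false) h) rf =
  mkrun (k + h.-1) lf true ++ mkrun (a - h.+1) true rf.
Proof.
elim: h a k => [|[|h] IHh] [|a] k //= _ h_le.
- by rewrite addn0 runs_nseq subSS subn0.
- by case: a h_le => [|a] _; rewrite /= addn0 ?runs_nseq ?subSS ?subn0.
- by rewrite IHh ?subSS ?addSnnS //; lia.
Qed.

Lemma runs_mark_nseq lf a h rf : 0 < a -> h <= a ->
  runs lf (mark_gap (nseq a false) h) rf = split_run (a, lf, rf) h.
Proof. exact: runs_from_mark_nseq. Qed.

Lemma leading_falses (c : seq bool) : exists a Y, c = nseq a false ++ Y /\ head true Y.
Proof.
elim: c => [|[] c [a [Y [-> headY]]]]; first by exists 0, [::].
  by exists 0, (true :: nseq a false ++ Y).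
by exists a.+1, Y.
Qed.

Lemma trailing_falses (c : seq bool) : exists X a, c = X ++ nseq a false /\ last true X.
Proof.
elim/last_ind: c => [|c [] [X [a [-> lastX]]]]; first by exists [::], 0.
  by exists (rcons (X ++ nseq a false) true), 0; rewrite cats0 last_rcons.
by exists X, a.+1; rewrite -cats1 -catA -[[:: false]]/(nseq 1 false) -nseqD addn1.
Qed.

Lemma run_decomp c j : j < size c -> nth true c j = false ->
  exists X a Y, [/\ c = X ++ nseq a false ++ Y, last true X, head true Y
                  & size X <= j < size X + a].
Proof.
move=> j_lt cj.
have [X [a1 [take_c lastX]]] := trailing_falses (take j c).
have [a2 [Y [drop_c headY]]] := leading_falses (drop j.+1 c).
exists X, (a1 + a2).+1, Y; split => //.
  rewrite -(cat_take_drop j c) (drop_nth true j_lt) cj take_c drop_c -catA.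
  by rewrite -addnS nseqD -catA.
have : size (take j c) = j by rewrite size_take j_lt.
by rewrite take_c size_cat size_nseq; lia.
Qed.

Lemma nth_run X a Y j : size X <= j < size X + a ->
  nth true (X ++ nseq a false ++ Y) j = false.
Proof.
move=> /andP[Xj ja]; have j_a : j - size X < a by lia.
by rewrite nth_cat ltnNge Xj /= nth_cat size_nseq j_a nth_nseq j_a.
Qed.

Lemma nth_nseq_true_nseq t k j : j < t + k.+1 ->
  nth true (nseq t false ++ true :: nseq k false) j = (j == t).
Proof.
move=> j_lt; rewrite nth_cat size_nseq nth_nseq.
case: ltngtP => // [t_j | ->]; last by rewrite subnn.
by rewrite -(subnSK t_j) /= nth_nseq ifT //; lia.
Qed.

Lemma mem_runs lo c ro p : p \in runs lo c ro ->
  exists X a Y, [/\ c = X ++ nseq a false ++ Y, last true X, head true Y, 0 < a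
                  & p = (a, (X != [::]) || lo, (Y != [::]) || ro)].
Proof.
have [m] := ubnP (size c); elim: m c lo => // m IHm c lo size_c.
have [a [[|[] Y] [c_def headY]]] := leading_falses c; subst c => //=.
  rewrite cats0 runs_nseq; case: a {size_c} => [|a] //; rewrite inE => /eqP->.
  by exists [::], a.+1, [::]; rewrite cats0.
rewrite runs_from_nseq /= mem_cat => /orP[].
  case: a {size_c} => [|a] //; rewrite inE => /eqP->.
  by exists [::], a.+1, (true :: Y).
have size_Y : size Y < m by move: size_c; rewrite size_cat /=; lia.
case/(IHm _ _ size_Y) => X [b [Z [-> lastX headZ b_gt0 ->]]].
exists (nseq a false ++ true :: X), b, Z; split => //; first by rewrite -catA.
  by rewrite last_cat.
by rewrite orbT; case: (nseq a false).
Qed.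

Definition gap_legal (c : seq bool) g :=
  exists j, [/\ j < size c, nth true c j = false & j.+1 = g \/ j = g].

Definition gap_move lo ro c g := [/\ gap_legal c g, lo || (0 < g) & ro || (g < size c)].

Lemma gap_move_in_run lo ro X a Y h : last true X -> head true Y ->
  let p := (a, (X != [::]) || lo, (Y != [::]) || ro) in
  let c := X ++ nseq a false ++ Y in
  in_run_move p h ->
  gap_move lo ro c (size X + h) /\
  score (runs lo c ro) + score (split_run p h) =
  score (runs lo (mark_gap c (size X + h)) ro) + run_score p.
Proof.
move=> lastX headY p c /and4P[a_gt0 h_le lf_h rf_h]; split; last first.
  rewrite /c mark_gap_run // !runs_cat3 // runs_mark_nseq // runs_nseq.
  by rewrite /p !score_cat score_mkrun; lia.
have size_c : size c = size X + a + size Y by rewrite /c !size_cat size_nseq addnA.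
split.
- by exists (size X + h - (h == a)); rewrite size_c /c nth_run; [split; lia | lia].
- by case: X {lastX p c size_c} lf_h => //= x X; rewrite orbT.
- rewrite size_c; case: Y {headY p c size_c} rf_h => [|y Y] /=.
    by rewrite addn0 ltn_add2l.
  by move=> _; apply/orP; right; lia.
Qed.

Lemma gap_move_run lo ro c g : gap_move lo ro c g ->
  exists p h, [/\ p \in runs lo c ro, in_run_move p h &
    score (runs lo c ro) + score (split_run p h) =
    score (runs lo (mark_gap c g) ro) + run_score p].
Proof.
case=> -[j [j_lt cj jg]] lo_g ro_g.
have [X [a [Y [c_def lastX headY j_run]]]] := run_decomp j_lt cj; subst c.
have g_def : g = size X + (g - size X) by lia.
have a_gt0 : 0 < a by lia.
have move_h : in_run_move (a, (X != [::]) || lo, (Y != [::]) || ro) (g - size X).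
  apply/and4P; split => //; first by lia.
    by have [->|] := eqVneq X [::]; rewrite ?subn0.
  have [Y0|] := eqVneq Y [::]; last by [].
  by move: ro_g j_run; rewrite Y0 !size_cat size_nseq /=; lia.
exists (a, (X != [::]) || lo, (Y != [::]) || ro), (g - size X); split => //.
  by rewrite runs_cat3 // runs_nseq -(prednK a_gt0) !mem_cat mem_head orbT.
by rewrite {2}g_def; case: (gap_move_in_run lastX headY move_h).
Qed.

Lemma run_gap_move lo ro c p h : p \in runs lo c ro -> in_run_move p h ->
  exists2 g, gap_move lo ro c g &
    score (runs lo c ro) + score (split_run p h) =
    score (runs lo (mark_gap c g) ro) + run_score p.
Proof.
case/mem_runs=> X [a [Y [-> lastX headY _ ->]]] move_h.
by case: (gap_move_in_run lastX headY move_h) => ? ?; exists (size X + h).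
Qed.

Lemma run_shape lo ro c p : p \in runs lo c ro ->
  lo || ro || (1 < size c) -> movable_run p.
Proof.
case/mem_runs=> X [a [Y [-> _ _ a_gt0 ->]]] /=; rewrite a_gt0.
by case: X Y => [|x X] [|y Y] /=; rewrite ?cats0 ?size_nseq -?orbA // => _; rewrite orbT.
Qed.

Section Path.
Variable n : nat.

Local Notation G := (path_rel n).

Definition dominated (D : {set 'I_n}) i : bool := [exists x in D, val x == i].

Definition half_len (b : bool) : nat := (n + ~~ b) %/ 2.

(* The vertices of parity [b], in increasing order.  A move at a vertex [u] of
   the other parity is the gap move [u.+1 %/ 2] on this sequence; gap [0] is
   available iff [b] (vertex 0 dominates vertex 1 alone), and the last gap iff
   [odd n == b]. *)
Definition half (D : {set 'I_n}) (b : bool) : seq bool :=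
  mkseq (fun j => dominated D (j * 2 + b)) (half_len b).

Definition half_runs D b : seq run := runs b (half D b) (odd n == b).

Definition potential D : nat := score (half_runs D false) + score (half_runs D true).

Lemma dominated_ord D (x : 'I_n) : dominated D x = (x \in D).
Proof.
apply/existsP/idP => [[y /andP[yD /eqP/val_inj <-]] // | xD].
by exists x; rewrite xD eqxx.
Qed.

Lemma dominated_ltn D i (i_lt : i < n) : dominated D i = (Ordinal i_lt \in D).
Proof. exact: (dominated_ord D (Ordinal i_lt)). Qed.

Lemma dominated_move D (u : 'I_n) i :
  dominated (D :|: nbhd G u) i = dominated D i || (i < n) && ((u.+1 == i) || (i.+1 == u)).
Proof.
case: (ltnP i n) => [i_lt | n_le]; first by rewrite !(dominated_ltn _ i_lt) !inE.
rewrite /= orbF; apply/existsP/existsP => -[x /andP[_ /eqP x_i]];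
by have := ltn_ord x; rewrite x_i ltnNge n_le.
Qed.

Lemma size_half D b : size (half D b) = half_len b.
Proof. exact: size_mkseq. Qed.

Lemma half_move_other D (u : 'I_n) :
  half (D :|: nbhd G u) (odd u) = half D (odd u).
Proof.
apply: eq_mkseq => j; rewrite dominated_move.
by rewrite [_ && _](_ : _ = false) ?orbF //; case u_odd: (odd u) => /=; lia.
Qed.

Lemma half_move D (u : 'I_n) :
  half (D :|: nbhd G u) (~~ odd u) = mark_gap (half D (~~ odd u)) (u.+1 %/ 2).
Proof.
apply: (@eq_from_nth _ true); rewrite ?size_mark_gap ?size_half // => j j_lt.
rewrite nth_mark_gap ?size_half // !nth_mkseq // dominated_move.
by congr (_ || _); rewrite /half_len in j_lt; case u_odd: (odd u) => /=; lia.
Qed.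

Lemma dominated_set1 (v : 'I_n) i : dominated [set v] i = (i == v).
Proof.
apply/existsP/eqP => [[x /andP[/set1P-> /eqP//]] | ->].
by exists v; rewrite set11 eqxx.
Qed.

Lemma half_set0 b : half (set0 : {set 'I_n}) b = nseq (half_len b) false.
Proof.
apply: (@eq_from_nth _ true); rewrite size_half ?size_nseq // => j j_lt.
by rewrite nth_mkseq // nth_nseq j_lt; apply/existsP => -[x]; rewrite inE.
Qed.

Lemma half_set1_other (v : 'I_n) :
  half [set v] (~~ odd v) = nseq (half_len (~~ odd v)) false.
Proof.
apply: (@eq_from_nth _ true); rewrite size_half ?size_nseq // => j j_lt.
by rewrite nth_mkseq // nth_nseq j_lt dominated_set1; lia.
Qed.

Lemma half_set1 (v : 'I_n) : half [set v] (odd v) =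
  nseq (v %/ 2) false ++ true :: nseq (half_len (odd v) - (v %/ 2).+1) false.
Proof.
have v_lt := ltn_ord v.
apply: (@eq_from_nth _ true); rewrite size_half ?size_cat /= ?size_nseq /half_len; first lia.
move=> j j_lt; rewrite nth_mkseq // nth_nseq_true_nseq; last by lia.
by rewrite dominated_set1; lia.
Qed.

Lemma legal_half D (u : 'I_n) :
  legal G D u <-> gap_legal (half D (~~ odd u)) (u.+1 %/ 2).
Proof.
have u_lt := ltn_ord u; split.
  case/existsP=> w /andP[uw wD]; have w_lt := ltn_ord w; rewrite /path_rel in uw.
  have w_def : w %/ 2 * 2 + ~~ odd u = w by lia.
  exists (w %/ 2); rewrite size_half /half_len nth_mkseq /half_len; last by lia.
  by rewrite w_def dominated_ord (negbTE wD); split; lia.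
case=> j []; rewrite size_half /half_len => j_lt; rewrite nth_mkseq // => Dj j_g.
have j_n : j * 2 + ~~ odd u < n by lia.
apply/existsP; exists (Ordinal j_n); rewrite -dominated_ord Dj andbT /path_rel /=.
lia.
Qed.

Lemma legal_gap_move D (u : 'I_n) : legal G D u ->
  gap_move (~~ odd u) (odd n == ~~ odd u) (half D (~~ odd u)) (u.+1 %/ 2).
Proof.
move=> /legal_half Du; split => //; first by case u_odd: (odd u) => //=; lia.
rewrite size_half /half_len; have := ltn_ord u.
by case n_odd: (odd n); case u_odd: (odd u) => //=; lia.
Qed.

Lemma gap_move_legal D b g : gap_move b (odd n == b) (half D b) g ->
  exists2 u : 'I_n, b = ~~ odd u /\ g = u.+1 %/ 2 & legal G D u.
Proof.
case=> D_g; rewrite size_half /half_len => b_g n_g.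
have g_le : g <= (n + ~~ b) %/ 2 by case: D_g => j []; rewrite size_half /half_len; lia.
have u_lt : g * 2 + b - 1 < n.
  by case: b {D_g} n_g b_g g_le; case n_odd: (odd n) => //=; lia.
have u_b : b = ~~ odd (g * 2 + b - 1) by case: b {D_g n_g g_le u_lt} b_g => /=; lia.
have g_u : g = (g * 2 + b - 1).+1 %/ 2.
  by case: b {D_g n_g g_le u_lt u_b} b_g => /=; lia.
by exists (Ordinal u_lt) => //; apply/legal_half; rewrite /= -u_b -g_u.
Qed.

Lemma potential_split D b :
  potential D = score (half_runs D b) + score (half_runs D (~~ b)).
Proof. by case: b; rewrite // addnC. Qed.

Lemma potential_move D (u : 'I_n) :
  potential (D :|: nbhd G u) =
  score (runs (~~ odd u) (mark_gap (half D (~~ odd u)) (u.+1 %/ 2)) (odd n == ~~ odd u)) +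
  score (half_runs D (odd u)).
Proof.
by rewrite (potential_split _ (~~ odd u)) negbK /half_runs half_move half_move_other.
Qed.

Lemma legal_run_move D (u : 'I_n) : legal G D u ->
  exists p h, [/\ p \in half_runs D (~~ odd u), in_run_move p h &
    potential D + score (split_run p h) = potential (D :|: nbhd G u) + run_score p].
Proof.
case/legal_gap_move/gap_move_run=> p [h [p_in move_h split_u]].
exists p, h; split => //.
by rewrite potential_move (potential_split D (~~ odd u)) negbK -addnAC split_u addnAC.
Qed.

Lemma run_legal_move D b p h : p \in half_runs D b -> in_run_move p h ->
  exists2 u : 'I_n, legal G D u &
    potential D + score (split_run p h) = potential (D :|: nbhd G u) + run_score p.
Proof.
move=> p_in /(run_gap_move p_in)[g /gap_move_legal[u [b_u g_u] Du] split_g].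
exists u => //; subst b g.
by rewrite potential_move (potential_split D (~~ odd u)) negbK -addnAC split_g addnAC.
Qed.

Lemma potential_legal_move D (u : 'I_n) : legal G D u ->
  potential (D :|: nbhd G u) < potential D <= potential (D :|: nbhd G u) + 3.
Proof.
case/legal_run_move=> p [h [_ move_h split_u]].
by have := run_score_split_run move_h; lia.
Qed.

Lemma potential_set0 : potential (set0 : {set 'I_n}) =
  run_score (half_len false, false, ~~ odd n) + run_score (half_len true, true, odd n).
Proof.
by rewrite /potential /half_runs !half_set0 !runs_nseq !score_mkrun; case: (odd n).
Qed.

Lemma potential_set1 (v : 'I_n) : potential [set v] =
  run_score (v %/ 2, odd v, true) +
  run_score (half_len (odd v) - (v %/ 2).+1, true, odd n == odd v) +
  run_score (half_len (~~ odd v), ~~ odd v, odd n == ~~ odd v).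
Proof.
rewrite (potential_split _ (odd v)) /half_runs half_set1 half_set1_other.
by rewrite runs_from_nseq /= !runs_nseq score_cat !score_mkrun.
Qed.

Hypothesis n_gt2 : 2 < n.

Lemma half_run_shape D b p : p \in half_runs D b -> movable_run p.
Proof.
move/run_shape; apply; rewrite size_half /half_len.
by case: b => //=; case: (odd n) => //=; lia.
Qed.

Lemma potential_terminal D : (forall u, ~~ legal G D u) -> potential D = 0.
Proof.
move=> terminal; suff no_runs b : half_runs D b = [::] by rewrite /potential !no_runs.
case runs_D: (half_runs D b) => [//|p s].
have p_in : p \in half_runs D b by rewrite runs_D mem_head.
have [h move_h] := run_move_exists (half_run_shape p_in).
have [u Du _] := run_legal_move p_in move_h.
by have := terminal u; rewrite Du.
Qed.

Lemma potential_best (D : {set 'I_n}) : (exists u, legal G D u) ->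
  (exists2 u : 'I_n, legal G D u & potential D = potential (D :|: nbhd G u) + 3) /\
  (exists2 u : 'I_n, legal G D u & potential D = potential (D :|: nbhd G u) + 1) \/
  ~~ odd (potential D) /\
  (exists2 u : 'I_n, legal G D u & potential D = potential (D :|: nbhd G u) + 2).
Proof.
move=> [u0 Du0].
have [/hasP[p p_in bonus_p] | no_bonus] :=
  boolP (has bonus (half_runs D false ++ half_runs D true)).
  have [b p_b] : exists b, p \in half_runs D b.
    by move: p_in; rewrite mem_cat => /orP[]; [exists false | exists true].
  have [[h3 move3 drop3] [h1 move1 drop1]] := bonus_run_moves bonus_p.
  left; split.
    by have [u Du split_u] := run_legal_move p_b move3; exists u => //; lia.
  by have [u Du split_u] := run_legal_move p_b move1; exists u => //; lia.
right; split.
  by apply: contra no_bonus; rewrite /potential -score_cat; apply: odd_score.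
have [p [h [p_in _ _]]] := legal_run_move Du0.
have plain_p : ~~ bonus p.
  by apply: (hasPn no_bonus); case: (odd u0) p_in; rewrite mem_cat => ->; rewrite ?orbT.
have [h2 move2 drop2] := plain_run_move (half_run_shape p_in) plain_p.
by have [u Du split_u] := run_legal_move p_in move2; exists u => //; lia.
Qed.

Lemma game_value_path D dom :
  game_value G #|'I_n|.+1 D dom = (potential D + ~~ dom) %/ 2.
Proof.
apply: game_value_halved_potential => {D dom}.
- exact: potential_terminal.
- exact: potential_legal_move.
- exact: potential_best.
Qed.

End Path.

Theorem lemma3p8 (n : nat) :
  3 <= n -> ~~ ((n %% 6 == 2) || (n %% 6 == 4)) ->
  ~ gamma_tg_critical (path_rel n).
Proof.
move=> n_gt2 n_mod critical.
pose v := if n %% 6 == 0 then 2 else if n %% 6 == 1 then 3 else 0.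
have v_lt : v < n by rewrite /v; case: eqP => ?; [|case: eqP => ?]; lia.
have := critical (Ordinal v_lt).
rewrite /gamma_tg_at /gamma_tg !(game_value_path n_gt2) potential_set0 potential_set1.
rewrite /= /v /half_len /run_score /=.
by case: eqP => ?; [|case: eqP => ?]; case n_odd: (odd n) => /=; lia.
Qed.
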